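(* Let $p$ be one of $(12,\{0,1\},\{0,1\})$, $(12,\{0,1\},\{0,2\})$, $(12,\{0,1\},\{1,2\})$, $(12,\{0,2\},\{0,2\})$, or any pattern in the same symmetry class as one of these. Then for all $n>1$, $a_n(p)=n!-(n-2)!$.
   Context: For $n\ge1$, $\mathcal S_n$ is the set of permutations $\pi=\pi_1\cdots\pi_n$ of $[n]$. A bi-vincular pattern of length $k$ is a triple $p=(\sigma,X,Y)$ with $\sigma\in\mathcal S_k$ and $X,Y\subseteq\{0,1,\dots,k\}$. A permutation $\pi\in\mathcal S_n$ contains $p$ if there are indices $1\le i_1<\dots<i_k\le n$ such that $(\pi_{i_1},\dots,\pi_{i_k})$ is order-isomorphic to $\sigma$ and, letting $j_1<\dots<j_k$ be the values $\pi_{i_1},\dots,\pi_{i_k}$ sorted increasingly and setting $i_0=j_0=0$, $i_{k+1}=j_{k+1}=n+1$, one has $i_{x+1}=i_x+1$ for all $x\in X$ and $j_{y+1}=j_y+1$ for all $y\in Y$. Otherwise $\pi$ avoids $p$; $a_n(p)$ is the number of $\pi\in\mathcal S_n$ avoiding $p$. Symmetries: $p^{i}=(\sigma^{-1},Y,X)$, $p^{r}=(\sigma^{r},\{k-x:x\in X\},Y)$, $p^{c}=(\sigma^{c},X,\{k-y:y\in Y\})$ with $\sigma^r_j=\sigma_{k+1-j}$, $\sigma^c_j=k+1-\sigma_j$; the symmetry class of $p$ consists of all patterns obtained from $p$ by finitely many applications of these maps. *)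

From mathcomp Require Import all_boot all_order all_fingroup.
Set Implicit Arguments. Unset Strict Implicit. Unset Printing Implicit Defensive.

(* Permutations of [n] are represented by 'S_n (0-indexed: value pi i + 1 at
   position i + 1).  A bi-vincular pattern of length k is (sigma, X, Y) with
   sigma : 'S_k and X, Y subsets of {0,...,k} = 'I_k.+1. *)
Record bvpat := BV { bk : nat; bsig : 'S_bk; bX : {set 'I_bk.+1}; bY : {set 'I_bk.+1} }.

Definition revperm (k : nat) : 'S_k := perm (@rev_ord_inj k).

(* symmetries; recall (s * t) x = t (s x) in mathcomp *)
Definition pat_i (p : bvpat) : bvpat := @BV (bk p) (bsig p)^-1 (bY p) (bX p).
Definition pat_r (p : bvpat) : bvpat :=
  @BV (bk p) (revperm (bk p) * bsig p) [set rev_ord x | x in bX p] (bY p).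
Definition pat_c (p : bvpat) : bvpat :=
  @BV (bk p) (bsig p * revperm (bk p)) (bX p) [set rev_ord y | y in bY p].

Inductive in_sym_class (p : bvpat) : bvpat -> Prop :=
| sc_refl : in_sym_class p p
| sc_i q : in_sym_class p q -> in_sym_class p (pat_i q)
| sc_r q : in_sym_class p q -> in_sym_class p (pat_r q)
| sc_c q : in_sym_class p q -> in_sym_class p (pat_c q).

Definition occurrence (n : nat) (pi : 'S_n) (p : bvpat) (f : {ffun 'I_(bk p) -> 'I_n}) : bool :=
  let k := bk p in
  [forall a : 'I_k, forall b : 'I_k, (a < b) ==> (f a < f b)] &&
  [forall a : 'I_k, forall b : 'I_k, (pi (f a) < pi (f b)) == (bsig p a < bsig p b)] &&
  (let I := 0 :: [seq (f j).+1 | j <- enum 'I_k] ++ [:: n.+1] in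
   (* sorted values j_1 < ... < j_k, padded with j_0 = 0, j_{k+1} = n+1 *)
   let J := 0 :: sort leq [seq (pi (f j)).+1 | j <- enum 'I_k] ++ [:: n.+1] in
   [forall x : 'I_k.+1, (x \in bX p) ==> (nth 0 I x.+1 == (nth 0 I x).+1)] &&
   [forall y : 'I_k.+1, (y \in bY p) ==> (nth 0 J y.+1 == (nth 0 J y).+1)]).

Definition contains (n : nat) (pi : 'S_n) (p : bvpat) : bool :=
  [exists f : {ffun 'I_(bk p) -> 'I_n}, @occurrence n pi p f].

Definition avoiders (n : nat) (p : bvpat) : nat := #|[set pi : 'S_n | ~~ contains pi p]|.

Definition pat12 (X Y : {set 'I_3}) : bvpat := @BV 2 1%g X Y.

From mathcomp Require Import all_boot all_order all_fingroup.
From mathcomp Require Import zify.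

(* A length-2 pattern with two of its three position adjacencies and two of
   its three value adjacencies pins an occurrence down completely: the two
   positions and the two values are forced.  So pi contains the pattern iff
   pi maps two fixed positions to two fixed values, which happens for exactly
   (n-2)! permutations.  All four base patterns have this shape, and the
   shape is invariant under inverse, reverse and complement. *)

Lemma card_perm_fix2 n (a c u v : 'I_n) : a != c -> u != v ->
  #|[set pi : 'S_n | (pi a == u) && (pi c == v)]| = (n - 2)`!.
Proof.
move=> ac uv; pose v' := tperm u a v.
have v'a : v' != a.
  by rewrite -[a in _ != a](tpermL u a) (inj_eq perm_inj) eq_sym.
pose g : 'S_n := (tperm u a * tperm v' c)%g.
have gu : g u = a by rewrite permM tpermL tpermD // eq_sym.
have gv : g v = c by rewrite permM -/v' tpermL.
(* g maps u, v to a, c, so the set is the right coset by g^-1 of the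
   permutations fixing a and c. *)
have -> : [set pi : 'S_n | (pi a == u) && (pi c == v)] =
          [set (s * g^-1)%g | s in perm_on (~: [set a; c])].
  apply/setP=> pi; rewrite inE; apply/andP/imsetP.
  - move=> [/eqP pa /eqP pc]; exists (pi * g)%g; last by rewrite mulgK.
    apply/subsetP=> x; rewrite !inE; apply: contra => /orP[]/eqP->.
      by rewrite permM pa gu.
    by rewrite permM pc gv.
  - move=> [s Hs ->]; rewrite !permM !(out_perm Hs) ?inE ?eqxx ?orbT //.
    by rewrite -gu -gv !permK !eqxx.
by rewrite (card_imset _ (mulIg _)) card_perm cardsCs setCK cards2 ac card_ord.
Qed.

Lemma forall_ordE n (P : pred 'I_n) : [forall t, P t] = all P (enum 'I_n).
Proof. by apply/forallP/allP => H t //; apply: H; rewrite mem_enum. Qed.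

Lemma enum_ord2 : enum 'I_2 = [:: ord0; ord_max].
Proof. by apply: (inj_map val_inj); rewrite val_enum_ord. Qed.

Lemma sort_pair (x y : nat) : sort leq [:: x; y] = [:: minn x y; maxn x y].
Proof. by rewrite /sort /=; case: leqP. Qed.

Lemma setC1_of_card (T : finType) (A : {set T}) : #|A|.+1 = #|T| -> exists z, A = ~: [set z].
Proof.
move=> cardA; have /cards1P[z Az] : #|~: A| == 1.
  by rewrite -(eqn_add2l #|A|) cardsC -cardA addn1.
by exists z; rewrite -Az setCK.
Qed.

Definition adjacent_gaps (G : {set 'I_3}) (x y n : nat) : bool :=
  [forall t : 'I_3, (t \in G) ==>
     (nth 0 [:: 0; x.+1; y.+1; n.+1] t.+1 == (nth 0 [:: 0; x.+1; y.+1; n.+1] t).+1)].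

(* The two remaining gaps glue x, y to the top (z = 0), to both ends (z = 1)
   or to the bottom (z = 2) of [0, n). *)
Definition forced_lo (z : 'I_3) n := if val z == 0 then n - 2 else 0.
Definition forced_hi (z : 'I_3) n := if val z == 2 then 1 else n - 1.

Lemma forced_lo_lt_hi z n : 1 < n -> forced_lo z n < forced_hi z n.
Proof. by rewrite /forced_lo /forced_hi; case: z => [[|[|[|//]]] ?] /=; lia. Qed.

Lemma forced_hi_lt z n : 1 < n -> forced_hi z n < n.
Proof. by rewrite /forced_hi; case: z => [[|[|[|//]]] ?] /=; lia. Qed.

Lemma adjacent_gapsE z x y n : 1 < n -> x < y ->
  adjacent_gaps (~: [set z]) x y n = (x == forced_lo z n) && (y == forced_hi z n).
Proof.
move=> n1 xy; rewrite /adjacent_gaps forall_ordE !enum_ordSl enum_ord0 /=.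
rewrite !inE -!(inj_eq val_inj) /= /forced_lo /forced_hi.
by case: z => [[|[|[|//]]] ?] /=; rewrite ?andbT;
  apply/andP/andP => -[/eqP H1 /eqP H2]; split; apply/eqP; lia.
Qed.

Lemma occurrence_pattern2 n (pi : 'S_n) (s : 'S_2) (X Y : {set 'I_3})
    (f : {ffun 'I_2 -> 'I_n}) :
  @occurrence n pi (@BV 2 s X Y) f =
  [&& f ord0 < f ord_max, (pi (f ord0) < pi (f ord_max)) == (s ord0 < s ord_max),
      adjacent_gaps X (f ord0) (f ord_max) n &
      adjacent_gaps Y (minn (pi (f ord0)) (pi (f ord_max)))
                      (maxn (pi (f ord0)) (pi (f ord_max))) n].
Proof.
rewrite /occurrence /= enum_ord2 /= sort_pair minnSS maxnSS.
have -> : [forall a : 'I_2, forall b : 'I_2, (a < b) ==> (f a < f b)] = (f ord0 < f ord_max).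
  by rewrite !forall_ordE enum_ord2 /= !forall_ordE enum_ord2 /= !andbT.
have [lt01 | //] := boolP (f ord0 < f ord_max).
have pi01 : pi (f ord0) != pi (f ord_max) :> nat.
  by rewrite (inj_eq val_inj) (inj_eq perm_inj) -(inj_eq val_inj) neq_ltn lt01.
have s01 : s ord0 != s ord_max :> nat by rewrite (inj_eq val_inj) (inj_eq perm_inj).
have -> : [forall a : 'I_2, forall b : 'I_2, (pi (f a) < pi (f b)) == (s a < s b)]
          = ((pi (f ord0) < pi (f ord_max)) == (s ord0 < s ord_max)).
  rewrite !forall_ordE enum_ord2 /= !forall_ordE enum_ord2 /= !ltnn !eqxx /= !andbT.
  by move: pi01 s01; case: ltngtP => // _ _; case: ltngtP.
by [].
Qed.

Lemma min_max_orientation (x y lo hi : nat) (b : bool) : lo < hi ->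
  [&& (x < y) == b, minn x y == lo & maxn x y == hi] =
  if b then (x == lo) && (y == hi) else (x == hi) && (y == lo).
Proof.
by case: b => lohi; apply/and3P/andP => [[/eqP xy /eqP mn /eqP mx] | [/eqP-> /eqP->]];
  split; apply/eqP; lia.
Qed.

Lemma contains_pattern2E n (pi : 'S_n) (s : 'S_2) (z w : 'I_3) (a c b d : 'I_n) :
  1 < n -> a = forced_lo z n :> nat -> c = forced_hi z n :> nat ->
  b = forced_lo w n :> nat -> d = forced_hi w n :> nat ->
  contains pi (@BV 2 s (~: [set z]) (~: [set w])) =
  if s ord0 < s ord_max then (pi a == b) && (pi c == d) else (pi a == d) && (pi c == b).
Proof.
move=> n1 va vc vb vd.
have ac : a < c by rewrite va vc forced_lo_lt_hi.
have occE (f : {ffun 'I_2 -> 'I_n}) : @occurrence n pi (@BV 2 s (~: [set z]) (~: [set w])) f =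
    [&& f ord0 == a :> nat, f ord_max == c :> nat &
    (if s ord0 < s ord_max then (pi a == b) && (pi c == d) else (pi a == d) && (pi c == b))].
  rewrite occurrence_pattern2.
  have [lt01 | ge01] := ltnP (f ord0) (f ord_max); last first.
    by apply/esym/and3P => -[/eqP f0 /eqP f1]; move: ge01; rewrite f0 f1 leqNgt ac.
  rewrite adjacent_gapsE // -va -vc.
  have [/andP[/eqP/val_inj-> /eqP/val_inj->] | /negbTE f_ac] :=
    boolP ((f ord0 == a :> nat) && (f ord_max == c :> nat)); last first.
    by rewrite /= andbF [RHS]andbA f_ac.
  rewrite !eqxx /=.
  have mm : minn (pi a) (pi c) < maxn (pi a) (pi c).
    suff : pi a != pi c :> nat by lia.
    by rewrite (inj_eq val_inj) (inj_eq perm_inj) -(inj_eq val_inj) neq_ltn ac.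
  by rewrite adjacent_gapsE // -vb -vd min_max_orientation // vb vd forced_lo_lt_hi.
apply/existsP/idP => [[f] | pi_ac].
  by rewrite occE => /and3P[].
by exists [ffun i => if i == ord0 then a else c]; rewrite occE !ffunE !eqxx.
Qed.

Definition pattern2_two_gaps (p : bvpat) : Prop :=
  [/\ bk p = 2, #|bX p| = 2 & #|bY p| = 2].

Lemma sym_class_pattern2_two_gaps p q :
  in_sym_class p q -> pattern2_two_gaps p -> pattern2_two_gaps q.
Proof.
move=> pq p2; elim: pq => // {}q _ [k2 cX cY]; split=> //=.
- by rewrite card_imset //; exact: rev_ord_inj.
- by rewrite card_imset //; exact: rev_ord_inj.
Qed.

Lemma avoiders_pattern2_two_gaps p n :
  pattern2_two_gaps p -> 1 < n -> avoiders n p = n`! - (n - 2)`!.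
Proof.
have setC1_of_card2 (G : {set 'I_3}) : #|G| = 2 -> exists z, G = ~: [set z].
  by move=> cG; apply: setC1_of_card; rewrite cG card_ord.
case: p => k s X Y [/= k2]; subst k.
move=> /setC1_of_card2[z ->] /setC1_of_card2[w ->] n1.
pose a := Ordinal (ltn_trans (forced_lo_lt_hi z n n1) (forced_hi_lt z n n1)).
pose c := Ordinal (forced_hi_lt z n n1).
pose b := Ordinal (ltn_trans (forced_lo_lt_hi w n n1) (forced_hi_lt w n n1)).
pose d := Ordinal (forced_hi_lt w n n1).
have ac : a != c by rewrite -val_eqE /= neq_ltn forced_lo_lt_hi.
have bd : b != d by rewrite -val_eqE /= neq_ltn forced_lo_lt_hi.
rewrite /avoiders.
have -> : [set pi : 'S_n | ~~ contains pi (@BV 2 s (~: [set z]) (~: [set w]))] =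
          ~: [set pi : 'S_n | if s ord0 < s ord_max then (pi a == b) && (pi c == d)
                              else (pi a == d) && (pi c == b)].
  by apply/setP => pi; rewrite !inE (@contains_pattern2E _ _ _ z w a c b d).
rewrite cardsCs setCK card_Sn.
by case: (s ord0 < s ord_max); rewrite card_perm_fix2 // eq_sym.
Qed.

Theorem mainTheorem5 (p : bvpat) :
  (in_sym_class (pat12 [set ord0; inord 1] [set ord0; inord 1]) p \/
   in_sym_class (pat12 [set ord0; inord 1] [set ord0; inord 2]) p \/
   in_sym_class (pat12 [set ord0; inord 1] [set inord 1; inord 2]) p \/
   in_sym_class (pat12 [set ord0; inord 2] [set ord0; inord 2]) p) ->
  forall n : nat, 1 < n -> avoiders n p = n`! - (n - 2)`!.
Proof.
move=> p_class n n1; apply: avoiders_pattern2_two_gaps n1.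
have pat12_two_gaps (x y u v : 'I_3) :
    x != y -> u != v -> pattern2_two_gaps (pat12 [set x; y] [set u; v]).
  by move=> xy uv; split; rewrite //= cards2 ?xy ?uv.
by case: p_class => [|[|[|]]] /sym_class_pattern2_two_gaps; apply; apply: pat12_two_gaps;
  rewrite -(inj_eq val_inj) /= ?inordK.
Qed.
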